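(* Let $\mathcal{F}=(f_1,\dots,f_M)$ be a random frame of $\mathbb{R}^N$ whose vectors are i.i.d. Gaussian vectors in $\mathbb{R}^N$ (distribution $\mathcal{N}(0,I_N)$), organized into $K$ disjoint pools $I_1,\dots,I_K$ (disjoint, union $\{1,\dots,M\}$) each of size $L$. Let the Maxout operator be $MO(x)=\big(\max_{j\in I_k}\langle x,f_j\rangle\big)_{k=1}^K$. Then, with probability $1$, $MO$ is injective on $\mathbb{R}^N$ if $K\ge 2N+1$. *)

From HB Require Import structures.
From mathcomp Require Import all_boot all_order all_algebra.
From mathcomp Require Import all_classical all_reals all_analysis.
Set Implicit Arguments. Unset Strict Implicit. Unset Printing Implicit Defensive.
Import Order.TTheory GRing.Theory Num.Theory.
Local Open Scope classical_set_scope.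
Local Open Scope ring_scope.

(* Mutual independence of a finite family of real random variables:
   product rule for every family of Borel sets (taking B i = setT recovers
   every subfamily). *)
Definition mutually_independent d (T : measurableType d) (R : realType)
  (P : probability T R) (I : finType) (X : I -> {RV P >-> R}) : Prop :=
  forall B : I -> set R, (forall i, measurable (B i)) ->
    P (\bigcap_(i in [set: I]) (X i @^-1` B i)) =
    (\big[*%E/1%E]_(i : I) P (X i @^-1` B i))%E.

Definition std_normal d (T : measurableType d) (R : realType)
  (P : probability T R) (X : {RV P >-> R}) : Prop :=
  forall A : set R, measurable A -> distribution P X A = normal_prob 0 1 A.

Definition inner (R : realType) (N : nat) (x y : 'I_N -> R) : R :=
  \sum_(i < N) x i * y i.

Definition fmax (R : realType) (T : finType) (A : {set T}) (v : T -> R) : R :=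
  fine (\big[Order.max/-oo%E]_(j in A) (v j)%:E).

Definition maxout (R : realType) (N M K : nat) (pools : 'I_K -> {set 'I_M})
  (f : 'I_M -> 'I_N -> R) (x : 'I_N -> R) : 'I_K -> R :=
  fun k => fmax (pools k) (fun j => inner x (f j)).

From HB Require Import structures.
From mathcomp Require Import all_boot all_order all_algebra.
From mathcomp Require Import all_classical all_reals all_analysis.
From mathcomp Require Import perm measurable_realfun ring lra.
Import Order.TTheory GRing.Theory Num.Theory.
Local Open Scope classical_set_scope.
Local Open Scope ring_scope.
Set Implicit Arguments. Unset Strict Implicit. Unset Printing Implicit Defensive.

(* If MO(x) = MO(y) with x <> y, then in every pool k some pair (a_k, b_k) of
   frame vectors satisfies <x, f_(a_k)> = <y, f_(b_k)>.  Fix such a choice of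
   pairs on 2N pools.  If at least N pools have a_k = b_k, then x - y is
   orthogonal to N frame vectors, so their N x N determinant vanishes;
   otherwise (x, y) lies in the kernel of the 2N x 2N matrix with rows
   (f_(a_k), -f_(b_k)).  Either determinant is a polynomial in the Gaussian
   entries which is affine in each entry and not identically zero, and such a
   polynomial vanishes with probability 0: write it as b + X_v a, where a and b
   only depend on the other entries, and use that X_v is independent of them
   and has a bounded density, so that X_v = -b/a has probability 0.  There are
   finitely many choices of pairs. *)

Section cylinders_off.
Context (R : realType) d (T : measurableType d) (P : probability T R)
  (V : finType) (X : V -> {RV P >-> R}).

Definition cylinders_off (v : V) : set (set T) :=
  [set E | exists C : V -> set R, [/\ (forall w, measurable (C w)), C v = setT &
     E = \bigcap_(w in [set: V]) X w @^-1` C w]].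

Lemma cylinders_off_measurable v : cylinders_off v `<=` measurable.
Proof.
move=> _ [C [mC _ ->]]; apply: fin_bigcap_measurable; first exact: finite_finset.
by move=> w _; exact: measurable_funPTI.
Qed.

Lemma cylinders_off_setI_closed v : setI_closed (cylinders_off v).
Proof.
move=> _ _ [C1 [mC1 C1v ->]] [C2 [mC2 C2v ->]].
exists (fun w => C1 w `&` C2 w); split.
- by move=> w; exact: measurableI.
- by rewrite C1v C2v setIT.
- apply/seteqP; split => x /=.
  + by move=> [H1 H2] w _; split; [exact: H1|exact: H2].
  + by move=> H; split => w _; have [] := H w I.
Qed.

Lemma cylinders_off_setT v : cylinders_off v setT.
Proof. by exists (fun=> setT); split => //; apply/seteqP; split => x //= _ w _. Qed.

Lemma cylinders_off_preimage v w (B : set R) : w != v -> measurable B ->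
  cylinders_off v (X w @^-1` B).
Proof.
move=> wv mB; exists (fun u => if u == w then B else setT); split.
- by move=> u; case: ifP.
- by rewrite eq_sym (negbTE wv).
- apply/seteqP; split => x /=.
  + by move=> Bx u _; case: ifP => // /eqP ->.
  + by move=> H; have := H w I; rewrite eqxx.
Qed.

Lemma preimage_setI_cylinder v (B : set R) (C : V -> set R) : C v = setT ->
  X v @^-1` B `&` \bigcap_(w in [set: V]) X w @^-1` C w =
  \bigcap_(w in [set: V]) X w @^-1` (if w == v then B else C w).
Proof.
move=> Cv; apply/seteqP; split => x /=.
- by move=> [Bx H] w _; case: ifP => [/eqP ->|_] //; exact: H.
- move=> H; split; first by have := H v I; rewrite eqxx.
  by move=> w _; have := H w I; case: ifP => [/eqP ->|//]; rewrite Cv.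
Qed.

Hypothesis indX : mutually_independent X.

(* Both sides are finite measures in [E] that agree on the setI-closed
   generating family [cylinders_off v], hence on the whole sigma-algebra. *)
Lemma prob_preimageI_off v (B : set R) E : measurable B ->
  <<s cylinders_off v >> E -> P (X v @^-1` B `&` E) = (P (X v @^-1` B) * P E)%E.
Proof.
move=> mB sE; have mXB : measurable (X v @^-1` B) by exact: measurable_funPTI.
have c0 : (0 <= fine (P (X v @^-1` B)))%R by apply: fine_ge0.
pose c : {nonneg R} := NngNum c0.
have cE : (c%:num)%:E = P (X v @^-1` B) by rewrite /= fineK // fin_num_measure.
rewrite setIC -cE.
apply: (@g_sigma_algebra_measure_unique _ _ _ (cylinders_off v)
  (@cylinders_off_measurable v) (fun=> setT) (fun=> @cylinders_off_setT v) _
  (mrestr P mXB) (mscale c P) (@cylinders_off_setI_closed v) _ _ E sE).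
- by apply/seteqP; split => // x _; exists 0%N.
- move=> _ [C [mC Cv ->]].
  change (P (\bigcap_w X w @^-1` C w `&` X v @^-1` B) =
    (c%:num)%:E * P (\bigcap_w X w @^-1` C w))%E.
  rewrite cE setIC preimage_setI_cylinder // indX; last by move=> w; case: ifP.
  rewrite indX // (bigD1 v) //= eqxx [in RHS](bigD1 v) //= Cv preimage_setT.
  rewrite probability_setT mul1e; congr (_ * _)%E.
  by apply: eq_bigr => w /negbTE ->.
- by move=> _; rewrite /mrestr /= -ge0_fin_numE ?fin_num_measure.
Qed.

End cylinders_off.

Section measurable_off.
Context (R : realType) d (T : measurableType d) (P : probability T R)
  (V : finType) (X : V -> {RV P >-> R}).

Definition measurable_off v (h : T -> R) :=
  measurable_fun (T := g_sigma_algebraType (cylinders_off X v)) setT h.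

Lemma measurable_off_coord v w : w != v -> measurable_off v (X w).
Proof.
move=> wv _ Y mY; rewrite setTI; apply: sub_sigma_algebra.
exact: cylinders_off_preimage.
Qed.

Lemma measurable_off_preimage v h (B : set R) : measurable_off v h ->
  measurable B -> <<s cylinders_off X v >> (h @^-1` B).
Proof. by move=> mh mB; have := mh measurableT B mB; rewrite setTI. Qed.

Lemma measurable_off_measurable v h : measurable_off v h -> measurable_fun setT h.
Proof.
move=> mh _ Y mY; rewrite setTI.
apply: (smallest_sub (sigma_algebra_measurable T)
  (@cylinders_off_measurable _ _ _ _ _ X v)).
exact: measurable_off_preimage.
Qed.

End measurable_off.

Section symmetric_bins.
Context (R : realType).

(* [sym_bin e k] is the set of the [x] with [`|floor (x / e)| = k]. *)
Definition sym_bin (e : R) (k : nat) : set R :=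
  [set` `[k%:R * e, (k%:R + 1) * e[] `|` [set` `[- k%:R * e, (1 - k%:R) * e[].

Lemma sym_bin_measurable e k : measurable (sym_bin e k).
Proof. by apply: measurableU; exact: measurable_itv. Qed.

Lemma sym_bin_floor e k x : 0 < e -> sym_bin e k x -> `|Num.floor (x / e)|%N = k.
Proof.
move=> e0 [|]; rewrite /= in_itv /= => /andP [h1 h2].
- have -> : Num.floor (x / e) = k%:Z; last by [].
  by apply: floor_def; rewrite intrD /= ler_pdivlMr // ltr_pdivrMr // h1 h2.
- have -> : Num.floor (x / e) = - k%:Z; last by rewrite abszN.
  apply: floor_def; rewrite intrD intrN /= ler_pdivlMr // ltr_pdivrMr // h1 /=.
  by rewrite addrC.
Qed.

Lemma sym_bin_floor_mem e x : 0 < e -> sym_bin e `|Num.floor (x / e)|%N x.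
Proof.
move=> e0; have /andP [h1 h2] := floor_itv (x / e); move: h1 h2; rewrite intrD.
set z := Num.floor (x / e) => h1 h2; have [z0|z0] := leP 0 z.
- left; rewrite /= in_itv /=.
  have -> : (`|z|%N%:R : R) = z%:~R by rewrite -[in RHS](gez0_abs z0).
  by rewrite -ler_pdivlMr // -ltr_pdivrMr // h1.
- right; rewrite /= in_itv /=.
  have -> : (`|z|%N%:R : R) = - z%:~R by rewrite -intrN -(ltz0_abs z0).
  by rewrite opprK -ler_pdivlMr // -ltr_pdivrMr // h1 /= addrC.
Qed.

Lemma lebesgue_sym_bin_le e k : 0 < e ->
  (lebesgue_measure (sym_bin e k) <= (e + e)%:E)%E.
Proof.
move=> e0; apply: le_trans
  (measureU2 lebesgue_measure (measurable_itv _) (measurable_itv _)) _.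
rewrite [X in (X + _)%E]lebesgue_measure_itv [X in (_ + X)%E]lebesgue_measure_itv.
rewrite /= !lte_fin.
by do 2 case: ifP => _; rewrite -?EFinD ?add0e ?adde0 ?lee_fin; nra.
Qed.

Lemma normal_prob_le_lebesgue (A : set R) : measurable A ->
  (normal_prob 0 1 A <= (normal_peak 1)%:E * lebesgue_measure A)%E.
Proof.
move=> mA; rewrite -integral_cst //.
apply: ge0_le_integral => //=.
- by move=> x _; rewrite lee_fin normal_pdf_ge0.
- by apply/measurable_EFinP; apply: measurable_funTS; exact: measurable_normal_pdf.
- by move=> x _; rewrite lee_fin normal_pdf_ub // oner_neq0.
Qed.

End symmetric_bins.

Section gaussian_coordinate.
Context (R : realType) d (T : measurableType d) (P : probability T R)
  (V : finType) (X : V -> {RV P >-> R}).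
Hypothesis indX : mutually_independent X.
Hypothesis gaussX : forall v, std_normal (X v).

Lemma measurable_coord_eq v h : measurable_fun setT h ->
  measurable [set w | X v w = h w].
Proof.
move=> mh; have := measurable_fun_eqr (measurable_funPT (X v)) mh measurableT
  (Y := [set true]) I.
by rewrite setTI; congr measurable; apply/seteqP; split => w /= /eqP.
Qed.

(* Cut the line into the bins of width [e]: the events "[X v] lies in bin [k]"
   and "[h] lies in bin [k]" are independent, and the former has probability at
   most [2 e] times the peak of the Gaussian density. *)
Lemma prob_coord_eq_off_le v h e : measurable_off X v h -> 0 < e ->
  (P [set w | X v w = h w] <= ((normal_peak 1 *+ 2) * e)%:E)%E.
Proof.
move=> mh e0; have mhT := measurable_off_measurable mh.
have mhbin k : measurable (h @^-1` sym_bin e k).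
  by have := mhT measurableT _ (sym_bin_measurable e k); rewrite setTI.
pose F k := X v @^-1` sym_bin e k `&` h @^-1` sym_bin e k.
have mF k : measurable (F k).
  by apply: measurableI => //; exact: measurable_funPTI (sym_bin_measurable _ _).
apply: le_trans (measure_sigma_subadditive P mF (measurable_coord_eq v mhT) _) _.
  move=> w /= eqw; exists `|Num.floor (X v w / e)|%N => //.
  by split => /=; [|rewrite -eqw]; exact: sym_bin_floor_mem.
apply: le_trans (@lee_nneseries R (fun k => P (F k))
  (fun k => ((normal_peak 1 *+ 2) * e)%:E * P (h @^-1` sym_bin e k))%E
  xpredT 0%N _ _) _.
- by move=> k _ _; exact: measure_ge0.
- move=> k _; rewrite /F (prob_preimageI_off indX (sym_bin_measurable e k));
    last exact: measurable_off_preimage (sym_bin_measurable e k).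
  apply: lee_wpmul2r => //.
  have := gaussX v (sym_bin_measurable e k); rewrite /distribution /pushforward => ->.
  apply: le_trans (normal_prob_le_lebesgue (sym_bin_measurable e k)) _.
  have -> : normal_peak 1 *+ 2 * e = normal_peak 1 * (e + e) by rewrite mulr2n; ring.
  rewrite EFinM; apply: lee_wpmul2l; first by rewrite lee_fin normal_peak_ge0.
  exact: lebesgue_sym_bin_le.
rewrite nneseriesZl; last by move=> k _; exact: measure_ge0.
rewrite -measure_semi_bigcup //.
- rewrite -[leRHS]mule1; apply: lee_wpmul2l.
    by rewrite lee_fin mulr_ge0 ?mulrn_wge0 ?normal_peak_ge0 // ltW.
  by apply: probability_le1; exact: bigcupT_measurable.
- move=> i j _ _ [w [/= hi hj]].
  by rewrite -(sym_bin_floor e0 hi) -(sym_bin_floor e0 hj).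
- exact: bigcupT_measurable.
Qed.

Lemma negligible_coord_eq_off v h : measurable_off X v h ->
  P.-negligible [set w | X v w = h w].
Proof.
move=> mh; have mE := measurable_coord_eq v (measurable_off_measurable mh).
apply/negligibleP => //; apply/eqP; rewrite eq_le measure_ge0 andbT.
apply/lee_addgt0Pr => e e0; rewrite add0e.
set c := normal_peak (1 : R) *+ 2.
have c0 : 0 <= c by rewrite mulrn_wge0 ?normal_peak_ge0.
apply: le_trans (prob_coord_eq_off_le mh (_ : 0 < e / (c + 1))) _.
  by rewrite divr_gt0 // ltr_wpDl.
by rewrite lee_fin -/c mulrA ler_pdivrMr ?ltr_wpDl //; nra.
Qed.

End gaussian_coordinate.

Section multiaffine.
Context (R : comRingType) (V : finType).
Implicit Types (z : V -> R) (F : (V -> R) -> R) (S : {set V}).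

Definition upd z v (t : R) : V -> R := fun w => if w == v then t else z w.

Lemma upd_id z v : upd z v (z v) = z.
Proof. by apply/funext => w; rewrite /upd; case: eqP => [->|]. Qed.

Lemma upd_upd z v s t : upd (upd z v s) v t = upd z v t.
Proof. by apply/funext => w; rewrite /upd; case: eqP. Qed.

Lemma updC z v w s t : v != w -> upd (upd z v s) w t = upd (upd z w t) v s.
Proof.
move=> vw; apply/funext => u; rewrite /upd.
have [uw|uw] := eqVneq u w; have [uv|uv] := eqVneq u v => //.
by move: vw; rewrite -uw -uv eqxx.
Qed.

Definition affine_at F v := forall z t,
  F (upd z v t) = F (upd z v 0) + t * (F (upd z v 1) - F (upd z v 0)).

Lemma affine_at_coord u v : affine_at (fun z => z u) v.
Proof. by move=> z t; rewrite /upd; case: eqP => _; ring. Qed.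

Definition depends_only F S :=
  forall z z', (forall w, w \in S -> z w = z' w) -> F z = F z'.

Definition multiaffine S F := depends_only F S /\ forall v, affine_at F v.

Definition slope F v z := F (upd z v 1) - F (upd z v 0).
Definition intercept F v z := F (upd z v 0).

Lemma multiaffineE S F v : multiaffine S F ->
  forall z, F z = intercept F v z + z v * slope F v z.
Proof. by move=> [_ aff] z; rewrite -{1}(upd_id z v) aff. Qed.

Lemma depends_only_upd S F v t : depends_only F S ->
  depends_only (fun z => F (upd z v t)) (S :\ v).
Proof.
move=> dep z z' eqz; apply: dep => w wS; rewrite /upd; case: eqP => // /eqP wv.
by apply: eqz; rewrite !inE wv.
Qed.

Lemma multiaffine_slope S F v : multiaffine S F -> multiaffine (S :\ v) (slope F v).
Proof.
move=> [dep aff]; split.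
  by move=> z z' eqz; rewrite /slope; congr (_ - _); exact: depends_only_upd eqz.
move=> w z t; rewrite /slope; have [->|wv] := eqVneq w v.
  by rewrite !upd_upd subrr mulr0 addr0.
by rewrite !(updC _ _ _ wv) (aff w (upd z v 1)) (aff w (upd z v 0)); ring.
Qed.

Lemma multiaffine_intercept S F v : multiaffine S F ->
  multiaffine (S :\ v) (intercept F v).
Proof.
move=> [dep aff]; split; first exact: depends_only_upd.
move=> w z t; rewrite /intercept; have [->|wv] := eqVneq w v.
  by rewrite !upd_upd subrr mulr0 addr0.
by rewrite !(updC _ _ _ wv) (aff w (upd z v 0)).
Qed.

Lemma multiaffine_set0 F : multiaffine finset.set0 F -> forall z z', F z = F z'.
Proof. by move=> [dep _] z z'; apply: dep => w; rewrite inE. Qed.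

End multiaffine.

Lemma measurable_invr (R : realType) : measurable_fun (setT : set R) GRing.inv.
Proof.
have -> : (setT : set R) = [set 0] `|` ~` [set 0].
  by apply/seteqP; split => x // _; have [->|x0] := eqVneq x 0; [left|right; exact/eqP].
apply/measurable_funU => //; first exact: measurableC.
split; first exact: measurable_fun_set1.
apply: open_continuous_measurable_fun; first by rewrite openC; exact: closed_eq.
by move=> x; rewrite inE => /eqP x0; exact: inv_continuous.
Qed.

Section multiaffine_gaussian.
Context (R : realType) d (T : measurableType d) (P : probability T R)
  (V : finType) (X : V -> {RV P >-> R}).
Hypothesis indX : mutually_independent X.
Hypothesis gaussX : forall v, std_normal (X v).

Definition coords (w : T) : V -> R := fun v => X v w.

Lemma multiaffine_measurable_off S F v : multiaffine S F -> v \notin S ->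
  measurable_off X v (fun w => F (coords w)).
Proof.
have [n] := ubnP #|S|; elim: n S F => // n IH S F ltSn HF vS.
have [S0|[u uS]] := set_0Vmem S.
  rewrite S0 in HF; rewrite (_ : (fun w => _) = fun=> F (fun=> 0)).
    exact: measurable_cst.
  by apply/funext => w; exact: multiaffine_set0.
have ltSun : (#|S :\ u| < n)%N by rewrite (cardsD1 u S) uS in ltSn.
have vSu : v \notin S :\ u by rewrite !inE negb_and vS orbT.
rewrite (_ : (fun w => _) =
  (fun w => intercept F u (coords w) + X u w * slope F u (coords w))).
  apply: measurable_funD; first exact: IH (multiaffine_intercept u HF) vSu.
  apply: measurable_funM; last exact: IH (multiaffine_slope u HF) vSu.
  by apply: measurable_off_coord; apply: contraNneq vS => <-.
by apply/funext => w; rewrite (multiaffineE u HF).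
Qed.

Lemma multiaffine_root_negligible S F : multiaffine S F -> (exists z, F z != 0) ->
  P.-negligible [set w | F (coords w) = 0].
Proof.
have [n] := ubnP #|S|; elim: n S F => // n IH S F ltSn HF [z Fz].
have [S0|[u uS]] := set_0Vmem S.
  apply: (negligibleS _ (negligible_set0 P)) => w /=.
  rewrite S0 in HF; rewrite (multiaffine_set0 HF _ z) => Fz0.
  by rewrite Fz0 eqxx in Fz.
have ltSun : (#|S :\ u| < n)%N by rewrite (cardsD1 u S) uS in ltSn.
have uSu : u \notin S :\ u by rewrite !inE eqxx.
have mslope := multiaffine_slope u HF; have mintercept := multiaffine_intercept u HF.
have [[z' az']|slope0] := pselect (exists z, slope F u z != 0); last first.
  have aE z' : slope F u z' = 0.
    by have [//|az'] := eqVneq (slope F u z') 0; case: slope0; exists z'.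
  have Fb z' : F z' = intercept F u z' by rewrite (multiaffineE u HF) aE mulr0 addr0.
  have -> : [set w | F (coords w) = 0] = [set w | intercept F u (coords w) = 0].
    by apply/seteqP; split => w /=; rewrite Fb.
  by apply: IH mintercept _ => //; exists z; rewrite -Fb.
(* Off the zero set of the slope, a root pins [X u] to a function of the
   other coordinates. *)
pose root w := - intercept F u (coords w) * (slope F u (coords w))^-1.
have mroot : measurable_off X u root.
  apply: measurable_funM.
    exact: measurable_funN (multiaffine_measurable_off mintercept uSu).
  exact: measurableT_comp (@measurable_invr R) (multiaffine_measurable_off mslope uSu).
apply: (negligibleS _ (negligibleU (IH _ _ ltSun mslope (ex_intro _ z' az'))
  (negligible_coord_eq_off indX gaussX mroot))).
move=> w /=; rewrite (multiaffineE u HF) /root /coords => F0.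
have [a0|a0] := eqVneq (slope F u (fun v => X v w)) 0; [by left|right].
by apply: (mulIf a0); rewrite mulfVK //; lra.
Qed.

End multiaffine_gaussian.

Lemma perm_set_first n (S : {set 'I_n}) :
  exists s : 'S_n, forall t, t \in S -> (s t < #|S|)%N.
Proof.
pose L := enum S ++ enum (~: S).
have sizeL : size L = n by rewrite size_cat -!cardE cardsC card_ord.
have memL t : t \in L by rewrite mem_cat !mem_enum !inE orbN.
have ltL t : (index t L < n)%N by rewrite -[X in (_ < X)%N]sizeL index_mem.
have f_inj : injective (fun t => Ordinal (ltL t)).
  by move=> t t' /(congr1 val) /= /(congr1 (nth t L)); rewrite !nth_index.
exists (perm f_inj) => t tS; rewrite permE /= index_cat mem_enum tS cardE.
by rewrite index_mem mem_enum.
Qed.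

Section determinant.
Context (R : fieldType).

Lemma det0_colP n (A : 'M[R]_n) :
  reflect (exists2 w : 'cV_n, w != 0 & A *m w = 0) (\det A == 0).
Proof.
rewrite -det_tr; apply: (iffP det0P) => -[w w0 Aw]; exists w^T; rewrite ?trmx_eq0 //.
  by rewrite -[A]trmxK -trmx_mul Aw trmx0.
by rewrite -trmx_mul Aw trmx0.
Qed.

Lemma cofactor_eq_row n (A B : 'M[R]_n) i j :
  (forall t k, t != i -> A t k = B t k) -> cofactor A i j = cofactor B i j.
Proof.
move=> eqAB; rewrite /cofactor; congr (_ * \det _).
by apply/matrixP => a b; rewrite !mxE; apply: eqAB; rewrite eq_sym neq_lift.
Qed.

(* Expand the determinant along the only row that involves the variable. *)
Lemma det_multiaffine (V : finType) n (own : V -> option 'I_n)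
    (A : (V -> R) -> 'M[R]_n) :
  (forall t j z z', (forall v, own v = Some t -> z v = z' v) -> A z t j = A z' t j) ->
  (forall t j v, affine_at (fun z => A z t j) v) ->
  multiaffine [set: V] (fun z => \det (A z)).
Proof.
move=> Adep Aaff; split.
  move=> z z' eqz; congr (\det _); apply/matrixP => t j.
  by apply: Adep => v _; apply: eqz; rewrite inE.
move=> v z s; case ownv: (own v) => [t0|]; last first.
  have Aupd s' : A (upd z v s') = A z.
    apply/matrixP => t j; apply: Adep => w; rewrite /upd; case: eqP => // ->.
    by rewrite ownv.
  by rewrite !Aupd subrr mulr0 addr0.
have Aupd s' t j : t != t0 -> A (upd z v s') t j = A z t j.
  move=> tt0; apply: Adep => w; rewrite /upd; case: eqP => // -> ownw.
  by move: tt0; rewrite ownv in ownw; case: ownw => ->; rewrite eqxx.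
have detE s' : \det (A (upd z v s')) =
    \sum_j A (upd z v s') t0 j * cofactor (A z) t0 j.
  rewrite (expand_det_row _ t0); apply: eq_bigr => j _; congr (_ * _).
  by apply: cofactor_eq_row => t k; exact: Aupd.
rewrite !detE; under eq_bigr do rewrite Aaff.
by rewrite -sumrB mulr_sumr -big_split /=; apply: eq_bigr => j _; ring.
Qed.

End determinant.

Lemma sum_delta (R : comRingType) n (k : 'I_n) (u : 'I_n -> R) :
  \sum_i (k == i)%:R * u i = u k.
Proof.
rewrite (bigD1 k) //= eqxx mul1r big1 ?addr0 // => i ik.
by rewrite eq_sym (negbTE ik) mul0r.
Qed.

Section frame_matrices.
Context (R : fieldType) (M N : nat).
Local Notation V := ('I_M * 'I_N)%type.
Implicit Types z : V -> R.

(* A point [z] of [R^V] is read as the frame [(z (m, _))_m] of [R^N]; these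
   matrices stack the frame vectors [a t], resp. the pairs [(a t, - b t)]. *)
Definition frame_rows n (a : 'I_n -> 'I_M) z : 'M[R]_(n, N) :=
  \matrix_(t, i) z (a t, i).

Definition pair_matrix (a b : 'I_(N + N) -> 'I_M) z : 'M[R]_(N + N) :=
  row_mx (frame_rows a z) (- frame_rows b z).

Lemma frame_rows_mulE n (a : 'I_n -> 'I_M) z (x : 'cV_N) t :
  (frame_rows a z *m x) t 0 = \sum_i z (a t, i) * x i 0.
Proof. by rewrite mxE; apply: eq_bigr => i _; rewrite mxE. Qed.

Lemma pair_matrix_mul_col a b z (x y : 'cV_N) :
  pair_matrix a b z *m col_mx x y = frame_rows a z *m x - frame_rows b z *m y.
Proof. by rewrite mul_row_col mulNmx. Qed.

Lemma pair_matrixE a b z t j : pair_matrix a b z t j =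
  match fintype.split j with inl i => z (a t, i) | inr i => - z (b t, i) end.
Proof.
by rewrite /pair_matrix -{1}(splitK j); case: fintype.split => i;
  rewrite ?row_mxEl ?row_mxEr !mxE.
Qed.

Lemma det_frame_rows_multiaffine (a : 'I_N -> 'I_M) (own : 'I_M -> option 'I_N) :
  (forall t, own (a t) = Some t) ->
  multiaffine [set: V] (fun z => \det (frame_rows a z)).
Proof.
move=> own_a; apply: (@det_multiaffine _ _ _ (fun v => own v.1)).
- by move=> t j z z' eqz; rewrite !mxE; apply: eqz; exact: own_a.
- by move=> t j v z s; rewrite !mxE; exact: affine_at_coord.
Qed.

Lemma det_frame_rows_witness (a : 'I_N -> 'I_M) (own : 'I_M -> option 'I_N) :
  (forall t, own (a t) = Some t) -> exists z, \det (frame_rows a z) != 0.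
Proof.
move=> own_a; exists (fun v => if own v.1 is Some t then (t == v.2)%:R else 0).
rewrite (_ : frame_rows _ _ = 1%:M) ?det1 ?oner_neq0 //.
by apply/matrixP => t i; rewrite !mxE /= own_a.
Qed.

Section pair_matrix.
Variables (a b : 'I_(N + N) -> 'I_M) (own : 'I_M -> option 'I_(N + N)).
Hypotheses (own_a : forall t, own (a t) = Some t)
  (own_b : forall t, own (b t) = Some t).

Lemma det_pair_matrix_multiaffine :
  multiaffine [set: V] (fun z => \det (pair_matrix a b z)).
Proof.
apply: (@det_multiaffine _ _ _ (fun v => own v.1)).
- move=> t j z z' eqz; rewrite !pair_matrixE; case: fintype.split => i.
    by apply: eqz; exact: own_a.
  by congr (- _); apply: eqz; exact: own_b.
- move=> t j v z s; rewrite !pair_matrixE /upd.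
  by case: fintype.split => i; case: eqP => _; ring.
Qed.

Definition pair_witness (s : 'S_(N + N)) (v : V) : R :=
  if own v.1 is Some t then
    (if v.1 == a t then (s t == lshift N v.2)%:R else (s t == rshift N v.2)%:R)
  else 0.

Lemma pair_witness_fst (s : 'S_(N + N)) t i :
  pair_witness s (a t, i) = (s t == lshift N i)%:R.
Proof. by rewrite /pair_witness /= own_a eqxx. Qed.

Lemma pair_witness_snd (s : 'S_(N + N)) t i : a t != b t ->
  pair_witness s (b t, i) = (s t == rshift N i)%:R.
Proof. by rewrite /pair_witness /= own_b eq_sym => /negbTE ->. Qed.

(* The witness makes row [t] equal to [+- e_(s t)], except that a row with
   [a t = b t] is [(u, - u)] with [u = e_(s t)]; as [s] sends those rows into
   the first half, the matrix is invertible. *)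
Lemma det_pair_witness (s : 'S_(N + N)) : (forall t, a t = b t -> (s t < N)%N) ->
  \det (pair_matrix a b (pair_witness s)) != 0.
Proof.
move=> s_ties; apply/det0_colP => -[w w0].
rewrite -[w]vsubmxK pair_matrix_mul_col => /eqP; rewrite subr_eq0 => /eqP /matrixP eqw.
move: w0; set x := usubmx w; set y := dsubmx w.
have y0 i : y i 0 = 0.
  set t := (s^-1)%g (rshift N i); have st : s t = rshift N i by rewrite permKV.
  have ab : a t != b t by apply/eqP => /s_ties; rewrite st ltnNge leq_addr.
  have := eqw t 0; rewrite !frame_rows_mulE big1 => [|k _]; last first.
    by rewrite pair_witness_fst st eq_rlshift mul0r.
  rewrite (eq_bigr (fun k => (i == k)%:R * y k 0)) ?sum_delta // => k _.
  by rewrite pair_witness_snd // st eq_rshift.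
have x0 i : x i 0 = 0.
  set t := (s^-1)%g (lshift N i); have st : s t = lshift N i by rewrite permKV.
  have := eqw t 0; rewrite !frame_rows_mulE [X in _ = X]big1 => [|k _]; last first.
    by rewrite y0 mulr0.
  rewrite (eq_bigr (fun k => (i == k)%:R * x k 0)) ?sum_delta // => k _.
  by rewrite pair_witness_fst st eq_lshift.
have -> : w = 0.
  rewrite -[w]vsubmxK -col_mx0; congr col_mx; apply/matrixP => i j.
    by rewrite (ord1 j) x0 mxE.
  by rewrite (ord1 j) y0 mxE.
by rewrite eqxx.
Qed.

Lemma det_pair_matrix_witness : (#|[set t | a t == b t]%SET| <= N)%N ->
  exists z, \det (pair_matrix a b z) != 0.
Proof.
move=> ties_le; have [s s_ties] := perm_set_first [set t | a t == b t]%SET.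
exists (pair_witness s); apply: det_pair_witness => t tie.
by apply: leq_trans ties_le; apply: s_ties; rewrite inE tie.
Qed.

End pair_matrix.
End frame_matrices.

Lemma nth_enum_mem (T : finType) (S : {set T}) k (x0 : 'I_k -> T) r :
  (k <= #|S|)%N -> nth (x0 r) (enum S) r \in S.
Proof. by move=> kS; rewrite -mem_enum mem_nth // -cardE (leq_trans (ltn_ord r)). Qed.

Lemma nth_enum_inj (T : finType) (S : {set T}) k (x0 : 'I_k -> T) :
  (k <= #|S|)%N -> injective (fun r => nth (x0 r) (enum S) r).
Proof.
move=> kS r r'; have lt_r (q : 'I_k) : (q < size (enum S))%N.
  by rewrite -cardE (leq_trans (ltn_ord q)).
rewrite (set_nth_default (x0 r') _ (lt_r r)) => /eqP.
by rewrite nth_uniq ?enum_uniq // => /eqP /val_inj.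
Qed.

Section collision_determinant.
Context (R : realType) (N M K : nat) (NK : (N + N <= K)%N)
  (c : {ffun 'I_K -> 'I_M * 'I_M}).
Local Notation V := ('I_M * 'I_N)%type.

Definition pool_of_row (t : 'I_(N + N)) : 'I_K := widen_ord NK t.
Definition chosen_fst t := (c (pool_of_row t)).1.
Definition chosen_snd t := (c (pool_of_row t)).2.
Definition ties : {set 'I_(N + N)} := [set t | chosen_fst t == chosen_snd t].
Definition tie_row (r : 'I_N) : 'I_(N + N) := nth (lshift N r) (enum ties) r.

Definition collision_det : (V -> R) -> R :=
  if (N <= #|ties|)%N then fun z => \det (frame_rows (chosen_fst \o tie_row) z)
  else fun z => \det (pair_matrix chosen_fst chosen_snd z).

Lemma pool_of_row_inj : injective pool_of_row.
Proof. by move=> t t' /(congr1 val) /= /val_inj. Qed.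

Lemma collision_det_eq0 z (x y : 'I_N -> R) : x <> y ->
  (forall k, inner x (fun i => z ((c k).1, i)) = inner y (fun i => z ((c k).2, i))) ->
  collision_det z = 0.
Proof.
move=> xy eq_inner; pose xc := \col_i x i; pose yc := \col_i y i.
have xcyc : xc != yc.
  apply/negP => /eqP /matrixP eqc; apply: xy; apply/funext => i.
  by have := eqc i 0; rewrite !mxE.
have eq_rows : frame_rows chosen_fst z *m xc = frame_rows chosen_snd z *m yc.
  apply/matrixP => t j; rewrite (ord1 j) !frame_rows_mulE.
  have := eq_inner (pool_of_row t); rewrite /inner => eqt.
  under eq_bigr do rewrite mxE mulrC; rewrite eqt.
  by apply: eq_bigr => i _; rewrite mxE mulrC.
rewrite /collision_det; case: ifP => tiesN; apply/eqP/det0_colP.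
  exists (xc - yc); first by rewrite subr_eq0.
  rewrite mulmxBr; apply/eqP; rewrite subr_eq0; apply/eqP/matrixP => r j.
  have := nth_enum_mem (lshift N) r tiesN; rewrite inE => /eqP tie.
  move/matrixP: eq_rows => /(_ (tie_row r) j).
  by rewrite (ord1 j) !frame_rows_mulE -tie.
exists (col_mx xc yc).
  by apply: contraNneq xcyc; rewrite -col_mx0 => /eq_col_mx [-> ->].
by rewrite pair_matrix_mul_col eq_rows subrr.
Qed.

Section valid_choice.
Variable pools : 'I_K -> {set 'I_M}.
Hypothesis pools_disjoint :
  forall (k k' : 'I_K) (j : 'I_M), j \in pools k -> j \in pools k' -> k = k'.
Hypothesis c_pools : forall k, ((c k).1 \in pools k) && ((c k).2 \in pools k).

Definition pool_owner n (rows : 'I_n -> 'I_K) (m : 'I_M) : option 'I_n :=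
  [pick t | m \in pools (rows t)].

Lemma pool_ownerE n (rows : 'I_n -> 'I_K) t m : injective rows ->
  m \in pools (rows t) -> pool_owner rows m = Some t.
Proof.
move=> rows_inj mt; rewrite /pool_owner.
case: pickP => [t' /= mt'|/(_ t)]; last by rewrite mt.
by congr Some; apply: rows_inj; exact: pools_disjoint mt' mt.
Qed.

Lemma chosen_fst_pool t : chosen_fst t \in pools (pool_of_row t).
Proof. by have /andP[] := c_pools (pool_of_row t). Qed.

Lemma chosen_snd_pool t : chosen_snd t \in pools (pool_of_row t).
Proof. by have /andP[] := c_pools (pool_of_row t). Qed.

Lemma collision_det_multiaffine : multiaffine [set: V] collision_det.
Proof.
rewrite /collision_det; case: ifP => tiesN.
  apply: (@det_frame_rows_multiaffine _ _ _ _ (pool_owner (pool_of_row \o tie_row))).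
  move=> r; apply: pool_ownerE; last exact: chosen_fst_pool.
  exact/inj_comp/nth_enum_inj/tiesN/pool_of_row_inj.
apply: (@det_pair_matrix_multiaffine _ _ _ _ _ (pool_owner pool_of_row)) => t;
  by apply: pool_ownerE pool_of_row_inj _; rewrite ?chosen_fst_pool ?chosen_snd_pool.
Qed.

Lemma collision_det_witness : exists z, collision_det z != 0.
Proof.
rewrite /collision_det; case: ifP => tiesN.
  apply: (@det_frame_rows_witness _ _ _ _ (pool_owner (pool_of_row \o tie_row))).
  move=> r; apply: pool_ownerE; last exact: chosen_fst_pool.
  exact/inj_comp/nth_enum_inj/tiesN/pool_of_row_inj.
apply: (@det_pair_matrix_witness _ _ _ _ _ (pool_owner pool_of_row)).
- by move=> t; apply: pool_ownerE pool_of_row_inj _; exact: chosen_fst_pool.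
- by move=> t; apply: pool_ownerE pool_of_row_inj _; exact: chosen_snd_pool.
- by rewrite ltnW // ltnNge tiesN.
Qed.

End valid_choice.
End collision_determinant.

Lemma negligible_fin_bigcup d (T : measurableType d) (R : realType)
    (mu : {measure set T -> \bar R}) (I : finType) (B : I -> set T) :
  (forall i, mu.-negligible (B i)) -> mu.-negligible (\bigcup_(i in [set: I]) B i).
Proof.
move=> negB; have -> : \bigcup_(i in [set: I]) B i = \big[setU/set0]_(i <- enum I) B i.
  rewrite -bigcup_seq (_ : [set` enum I] = setT) //.
  by apply/seteqP; split => i // _; rewrite /= mem_enum.
by elim/big_ind: _ => //; [exact: negligible_set0|exact: negligibleU].
Qed.

Lemma fmax_attained (R : realType) (T : finType) (A : {set T}) (v : T -> R) :
  (0 < #|A|)%N -> exists2 j, j \in A & fmax A v = v j.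
Proof.
rewrite card_gt0 => /set0Pn [j0 j0A]; rewrite /fmax (bigmax_eq_arg (-oo)%E j0) //.
  by exists [arg max_(i > j0 in A) (v i)%:E]%O => //; case: arg_maxP.
by move=> i _; rewrite leNye.
Qed.

Lemma maxout_eq_choice (R : realType) N M K (pools : 'I_K -> {set 'I_M})
    (f : 'I_M -> 'I_N -> R) (x y : 'I_N -> R) :
  (forall k, 0 < #|pools k|)%N -> maxout pools f x = maxout pools f y ->
  exists c : {ffun 'I_K -> 'I_M * 'I_M}, forall k,
    [/\ (c k).1 \in pools k, (c k).2 \in pools k &
         inner x (f (c k).1) = inner y (f (c k).2)].
Proof.
move=> pools0 eqxy.
suff /fin_all_exists [c cP] : forall k, exists ab : 'I_M * 'I_M,
    [/\ ab.1 \in pools k, ab.2 \in pools k & inner x (f ab.1) = inner y (f ab.2)].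
  by exists [ffun k => c k] => k; rewrite ffunE.
move=> k; have [a ak xa] := fmax_attained (fun j => inner x (f j)) (pools0 k).
have [b bk yb] := fmax_attained (fun j => inner y (f j)) (pools0 k).
exists (a, b); split => //=.
by have := congr1 (fun g => g k) eqxy; rewrite /maxout xa yb.
Qed.

Theorem proposition6 (R : realType) (d : measure_display) (T : measurableType d)
  (P : probability T R) (N M K L : nat) (pools : 'I_K -> {set 'I_M})
  (X : 'I_M * 'I_N -> {RV P >-> R}) :
  (0 < L)%N ->
  (forall k, #|pools k| = L) ->
  (forall (k k' : 'I_K) (j : 'I_M), j \in pools k -> j \in pools k' -> k = k') ->
  (forall j : 'I_M, exists k, j \in pools k) ->
  mutually_independent X ->
  (forall p, std_normal (X p)) ->
  (2 * N + 1 <= K)%N ->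
  {ae P, forall w, injective (maxout pools (fun j i => X (j, i) w))}.
Proof.
move=> L0 cardP disj _ indX gaussX NK1.
have NK : (N + N <= K)%N by rewrite addnn -mul2n ltnW // -addn1.
have pools0 k : (0 < #|pools k|)%N by rewrite cardP.
pose valid (c : {ffun 'I_K -> 'I_M * 'I_M}) :=
  forall k, ((c k).1 \in pools k) && ((c k).2 \in pools k).
pose collision c := [set w | valid c /\ collision_det NK c (coords X w) = 0].
have : P.-negligible (\bigcup_(c in [set: {ffun 'I_K -> 'I_M * 'I_M}]) collision c).
  apply: negligible_fin_bigcup => c; have [vc|nvc] := pselect (valid c); last first.
    by apply: (negligibleS _ (negligible_set0 P)) => w [/nvc].
  apply: (negligibleS _ (multiaffine_root_negligible indX gaussX
    (collision_det_multiaffine R NK disj vc) (collision_det_witness R NK disj vc))).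
  by move=> w [].
apply: negligibleS.
move=> w /= not_inj; apply: contrapT => no_collision; apply: not_inj => x y eqxy.
apply: contrapT => xy; have [c cP] := maxout_eq_choice pools0 eqxy.
apply: no_collision; exists c => //; split.
  by move=> k; have [-> ->] := cP k.
by apply: (collision_det_eq0 NK xy) => k; have [_ _] := cP k.
Qed.
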